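(* Let $\mathcal N$ be a network and $T\ge1$. A nonnegative vector $R\in[0,\infty)^{\mathcal L}$ belongs to $\mathcal R^{(\mathcal M_T,\mathcal E_T)}$ if and only if there exists $R'\in\mathrm{conv}\{R_C: C\in\mathrm{cycle}^*(\mathcal M_T,\mathcal E_T)\}$ with $R\preccurlyeq R'$.
   Context: A network is a triple $\mathcal N=(\mathcal L,\mathcal I,D_{\mathcal L})$ where $\mathcal L$ is a finite nonempty set of links, each $\mathcal I(l)$ is a collection of nonempty subsets of $\mathcal L$, and $D_{\mathcal L}$ assigns an integer $D_{\mathcal L}(l,l')$ to every pair with $l'\in\phi$ for some $\phi\in\mathcal I(l)$. A schedule is a map $S:\mathcal L\times\mathbb Z\to\{0,1\}$; $S(l,t)$ has a collision if there is $\phi\in\mathcal I(l)$ with $S(l',t+D_{\mathcal L}(l,l'))=1$ for all $l'\in\phi$; $S$ is collision free if no $(l,t)$ with $S(l,t)=1$ has a collision. $S[T,k]$ is the $|\mathcal L|\times T$ binary matrix with $S[T,k](l,j)=S(l,kT+j)$. The scheduling graph $(\mathcal M_T,\mathcal E_T)$ has vertex set $\mathcal M_T$ = all $|\mathcal L|\times T$ binary matrices $A$ with $A=S[T,0]$ for some collision-free $S$, and edge set $\mathcal E_T$ = all pairs $(A,B)$ with $A=S[T,0]$, $B=S[T,1]$ for some collision-free $S$. A cycle is a sequence $(A_0,\dots,A_k)$, $k\ge1$, with $(A_i,A_{i+1})\in\mathcal E_T$, $A_k=A_0$, and $A_0,\dots,A_{k-1}$ pairwise distinct; its rate vector is $R_C=\frac{1}{kT}\sum_{i=0}^{k-1}A_i\mathbf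 1$ ($\mathbf 1$ the all-ones vector of length $T$). $\mathcal R^{(\mathcal M_T,\mathcal E_T)}$ is the convex hull of the rate vectors of all cycles. For two sequences of matrices of the same length, $(A_0,\dots,A_k)\succcurlyeq(B_0,\dots,B_k)$ means $A_i\succcurlyeq B_i$ entrywise for all $i$. $\mathrm{cycle}^*(\mathcal M_T,\mathcal E_T)$ (the maximal cycles) is the set of cycles $C$ such that there is no cycle $C'\neq C$ of the same length with $C'\succcurlyeq C$. The relation $R\preccurlyeq R'$ on vectors is entrywise. *)

From HB Require Import structures.
From mathcomp Require Import all_boot all_order all_algebra.
Set Implicit Arguments. Unset Strict Implicit. Unset Printing Implicit Defensive.
Import Order.TTheory GRing.Theory Num.Theory.

Section Network.
(* A network (L, I, D): L a finite (nonempty) type of links, I l a collection of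
   (nonempty) subsets of L, D the integer delays (a total function; only values on
   the relevant pairs are ever used). *)
Variables (L : finType) (I : L -> {set {set L}}) (D : L -> L -> int).

Definition schedule := L -> int -> bool.

Definition has_collision (S : schedule) (l : L) (t : int) : Prop :=
  exists2 phi, phi \in I l & forall l', l' \in phi -> S l' (t + D l l')%R.

Definition collision_free (S : schedule) : Prop :=
  forall l t, S l t -> ~ has_collision S l t.

Variable T : nat.

Definition mat := {ffun L * 'I_T -> bool}.
Definition mat0 : mat := [ffun _ => false].

Definition window (S : schedule) (k : int) : mat :=
  [ffun p => S p.1 (k * (T%:Z) + (nat_of_ord p.2)%:Z)%R].

Definition in_M (A : mat) : Prop := exists S, collision_free S /\ A = window S 0.

Definition in_E (A B : mat) : Prop :=
  exists S, [/\ collision_free S, A = window S 0 & B = window S 1].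

(* A cycle (A_0, ..., A_k), k >= 1, represented as the list of its k+1 entries. *)
Definition is_cycle (c : seq mat) : Prop :=
  [/\ 2 <= size c,
      forall i, i.+1 < size c -> in_E (nth mat0 c i) (nth mat0 c i.+1),
      nth mat0 c (size c).-1 = nth mat0 c 0
    & uniq (take (size c).-1 c)].

Definition mat_ge (A B : mat) : Prop := forall p, B p <= A p.

Definition seq_ge (c c' : seq mat) : Prop :=
  size c = size c' /\ forall i, i < size c -> mat_ge (nth mat0 c i) (nth mat0 c' i).

Definition is_max_cycle (c : seq mat) : Prop :=
  is_cycle c /\
  ~ exists c', [/\ is_cycle c', c' <> c, size c' = size c & seq_ge c' c].

Variable R : realFieldType.
Local Open Scope ring_scope.

Definition rate (c : seq mat) : L -> R := fun l =>
  (\sum_(i < (size c).-1) \sum_(j < T) ((nth mat0 c i) (l, j) : nat)%:R)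
    / ((size c).-1 * T)%:R.

Definition conv (P : (L -> R) -> Prop) (x : L -> R) : Prop :=
  exists n (w : 'I_n -> R) (p : 'I_n -> L -> R),
    [/\ forall i, P (p i), forall i, 0 <= w i, \sum_(i < n) w i = 1
      & forall l, x l = \sum_(i < n) w i * p i l].

Definition cycle_rates (v : L -> R) : Prop := exists2 c, is_cycle c & v = rate c.
Definition max_cycle_rates (v : L -> R) : Prop := exists2 c, is_max_cycle c & v = rate c.

End Network.

(* (=>) Every cycle is dominated entrywise by a maximal cycle of the same length
   (moving to larger cycles strictly increases the number of transmissions, which
   is bounded), rates are monotone, and domination passes to convex combinations.
   (<=) Maximal cycles are cycles, so it suffices that the hull of the cycle rates
   is down-closed in the nonnegative orthant.  A general convexity argument reduces
   this to zeroing a single coordinate of a single cycle rate.  Silencing a link in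
   every window of a cycle keeps schedules collision free, so it yields a closed
   walk whose rate is the cycle rate with that coordinate zeroed; and the rate of
   any closed walk lies in the hull of the cycle rates, by splitting the walk at a
   repeated window into two shorter closed walks. *)

From mathcomp Require Import all_boot all_order all_algebra.
From Stdlib Require Import Classical.
From Stdlib Require List.
From mathcomp Require Import ring zify.
Import Order.TTheory GRing.Theory Num.Theory.
Local Open Scope ring_scope.

Set Implicit Arguments. Unset Strict Implicit.

Section ConvexCombinations.
Variables (L : finType) (R : realFieldType).
Implicit Types (P Q : (L -> R) -> Prop) (x y : L -> R).

(* A convex combination presented as a list of (point, weight) pairs: unlike the
   ordinal-indexed families of [conv], lists are easy to concatenate and nest. *)
Definition convl P x : Prop :=
  exists s : seq ((L -> R) * R),
    [/\ forall q, List.In q s -> P q.1 /\ 0 <= q.2, \sum_(q <- s) q.2 = 1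
      & forall l, x l = \sum_(q <- s) q.2 * q.1 l].

Lemma In_nth (A : Type) (d : A) (s : seq A) i : (i < size s)%N -> List.In (nth d s i) s.
Proof. by elim: s i => [|a s IH] [|i] //= Hi; [left | right; apply: IH]. Qed.

Lemma conv_convl P x : conv P x <-> convl P x.
Proof.
split=> [[n [w [p [Pp w_ge0 w_sum Ex]]]] | [s [Ps s_sum Ex]]].
  exists [seq (p i, w i) | i <- index_enum 'I_n]; split.
  - by move=> q /List.in_map_iff [i [<- _]]; split=> //=; apply: Pp.
  - by rewrite big_map.
  - by move=> l; rewrite big_map Ex.
pose d := ((fun _ : L => 0 : R), 0 : R).
exists (size s), (fun i => (nth d s i).2), (fun i => (nth d s i).1); split.
- by move=> i; apply: (Ps _ (In_nth d (ltn_ord i))).1.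
- by move=> i; apply: (Ps _ (In_nth d (ltn_ord i))).2.
- by rewrite -s_sum (big_nth d) big_mkord.
- by move=> l; rewrite Ex (big_nth d) big_mkord.
Qed.

Lemma conv_sub P Q x : (forall v, P v -> Q v) -> conv P x -> conv Q x.
Proof.
by move=> PQ [n [w [p [Pp ? ? ?]]]]; exists n, w, p; split=> // i; apply: PQ.
Qed.

Lemma conv_dominate P Q x :
  (forall v, P v -> exists2 u, Q u & forall l, v l <= u l) ->
  conv P x -> exists x', conv Q x' /\ forall l, x l <= x' l.
Proof.
move=> PQ [n [w [p [Pp w_ge0 w_sum Ex]]]].
have [u Hu] : exists u : 'I_n -> L -> R, forall i, Q (u i) /\ forall l, p i l <= u i l.
  apply: (@fin_all_exists _ (fun=> L -> R) (fun i u => Q u /\ forall l, p i l <= u l)).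
  by move=> i; have [u Qu le_pu] := PQ _ (Pp i); exists u.
exists (fun l => \sum_(i < n) w i * u i l); split.
  by exists n, w, u; split=> // i; apply: (Hu i).1.
by move=> l; rewrite Ex; apply: ler_sum => i _; apply: ler_wpM2l => //; apply: (Hu i).2.
Qed.

Lemma convl_ext P x y : convl P x -> (forall l, x l = y l) -> convl P y.
Proof. by move=> [s [? ? Ex]] Exy; exists s; split=> // l; rewrite -Exy. Qed.

Lemma convl_point P x : P x -> convl P x.
Proof.
move=> Px; exists [:: (x, 1)]; split.
- by move=> q /= [<-|[]].
- by rewrite big_seq1.
- by move=> l; rewrite big_seq1 mul1r.
Qed.

Lemma convl_flatten P s : (forall q, List.In q s -> convl P q.1 /\ 0 <= q.2) ->
  exists t, [/\ forall q, List.In q t -> P q.1 /\ 0 <= q.2,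
     \sum_(q <- t) q.2 = \sum_(q <- s) q.2 &
     forall l, \sum_(q <- t) q.2 * q.1 l = \sum_(q <- s) q.2 * q.1 l].
Proof.
elim: s => [|[z v] s IH] Hs; first by exists [::].
have [t [Pt t_sum Et]] := IH (fun q Hq => Hs q (or_intror Hq)).
have [[u [Pu u_sum Ez]] v_ge0] := Hs _ (or_introl erefl).
exists ([seq (q.1, v * q.2) | q <- u] ++ t); split.
- move=> q /List.in_app_iff [/List.in_map_iff [q' [<- Hq']] | /Pt //].
  by have [? ?] := Pu _ Hq'; split=> //=; apply: mulr_ge0.
- by rewrite big_cat big_map /= -mulr_sumr u_sum mulr1 t_sum big_cons.
- move=> l; rewrite big_cat big_map /= Et big_cons /= [z l]Ez mulr_sumr.
  by congr (_ + _); apply: eq_bigr => q _; rewrite mulrA.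
Qed.

Lemma convl_bin P x y (lam : R) : convl P x -> convl P y -> 0 <= lam <= 1 ->
  convl P (fun l => lam * x l + (1 - lam) * y l).
Proof.
move=> Cx Cy /andP[lam_ge0 lam_le1].
have [t [Pt t_sum Et]] := @convl_flatten P [:: (x, lam); (y, 1 - lam)]
  ltac:(by move=> q /= [<-|[<-|[]]]; split=> //=; rewrite subr_ge0).
exists t; split=> //.
- by rewrite t_sum !big_cons big_nil addr0 addrC subrK.
- by move=> l; rewrite Et !big_cons big_nil addr0.
Qed.

Definition set_coord (l0 : L) (t : R) x : L -> R :=
  fun l => if l == l0 then t else x l.

Section DownClosure.
Variable P : (L -> R) -> Prop.

Hypothesis P_zero_coord : forall v l0, P v -> convl P (set_coord l0 0 v).

Lemma convl_zero_coord l0 y : convl P y -> convl P (set_coord l0 0 y).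
Proof.
move=> [s [Ps s_sum Ey]].
have [u [Pu u_sum Eu]] :=
  @convl_flatten P [seq (set_coord l0 0 q.1, q.2) | q <- s]
  ltac:(by move=> q /List.in_map_iff [q' [<- /Ps [? ?]]]; split=> //=; apply: P_zero_coord).
exists u; split=> //; first by rewrite u_sum big_map.
move=> l; rewrite Eu big_map /set_coord /=; case: eqP => _; last by rewrite Ey.
by rewrite big1 // => q _; rewrite mulr0.
Qed.

(* Lowering one coordinate to any value in [0, y l0]: interpolate between y and
   y with that coordinate zeroed. *)
Lemma convl_lower_coord l0 t y : convl P y -> 0 <= t <= y l0 ->
  convl P (set_coord l0 t y).
Proof.
move=> Cy /andP[t_ge0 t_le]; have Cz := convl_zero_coord l0 Cy.
have [y0|y0] := eqVneq (y l0) 0.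
  have t0 : t = 0 by apply/le_anti; rewrite t_ge0 -y0 t_le.
  by rewrite t0.
have y_gt0 : 0 < y l0 by rewrite lt_def y0 (le_trans t_ge0 t_le).
have lam01 : 0 <= t / y l0 <= 1 by rewrite divr_ge0 ?(ltW y_gt0) //= ler_pdivrMr // mul1r.
apply: (convl_ext (convl_bin Cy Cz lam01)) => l; rewrite /set_coord.
case: eqP => [->|_]; first by rewrite mulr0 addr0 divfK.
by rewrite -mulrDl addrC subrK mul1r.
Qed.

Lemma convl_down_closed x y : convl P y -> (forall l, 0 <= x l <= y l) -> convl P x.
Proof.
suff lower_on (U : seq L) y' : convl P y' -> (forall l, 0 <= x l <= y' l) ->
    (forall l, l \notin U -> x l = y' l) -> convl P x.
  by move=> Cy xy; apply: (lower_on (enum L) y) => // l; rewrite mem_enum.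
elim: U y' => [|l0 U IH] y' Cy xy Ex.
  by apply: (convl_ext Cy) => l; rewrite Ex.
apply: (IH _ (convl_lower_coord Cy (xy l0))) => l; rewrite /set_coord.
  by case: eqP => [->|_] //; rewrite lexx (andP (xy l0)).1.
by case: eqP => [->|/eqP ne] // Ul; apply: Ex; rewrite in_cons negb_or ne.
Qed.

End DownClosure.
End ConvexCombinations.

Section ClosedWalks.
Variables (L : finType) (I : L -> {set {set L}}) (D : L -> L -> int) (T : nat).

Local Notation mat := (mat L T).
Local Notation mat0 := (mat0 L T).
Local Notation in_E := (in_E I D (T:=T)).

Fixpoint walk (x : mat) (s : seq mat) : Prop :=
  if s is y :: s' then in_E x y /\ walk y s' else True.

Lemma walk_cat x s1 s2 : walk x (s1 ++ s2) <-> walk x s1 /\ walk (last x s1) s2.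
Proof. by elim: s1 x => [|y s1 IH] x /=; [tauto | rewrite IH; tauto]. Qed.

Lemma walk_rcons x s y : walk x (rcons s y) <-> walk x s /\ in_E (last x s) y.
Proof. by rewrite -cats1 walk_cat /=; tauto. Qed.

Lemma walk_nth x s : walk x s <->
  forall i, (i.+1 < size (x :: s))%N ->
    in_E (nth mat0 (x :: s) i) (nth mat0 (x :: s) i.+1).
Proof.
elim: s x => [|y s IH] x /=; first by split=> // _ [|i].
rewrite IH; split=> [[Exy Hs] [|i] //= Hi | Hs]; first exact: Hs.
by split=> [|i Hi]; [apply: (Hs 0%N) | apply: (Hs i.+1)].
Qed.

(* A closed walk x_0 -> ... -> x_(k-1) -> x_0, listed without repeating x_0. *)
Definition closed_walk (w : seq mat) : Prop :=
  if w is x :: s then walk x (rcons s x) else False.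

Lemma closed_walk_rot w n : closed_walk w -> closed_walk (rot n w).
Proof.
have rot1 w' : closed_walk w' -> closed_walk (rot 1 w').
  case: w' => [|x [|y s]] //; rewrite rot1_cons /= => -[Exy].
  by rewrite !walk_rcons /= last_rcons.
elim: n => [|n IH] Cw; first by rewrite rot0.
case: (ltnP n (size w)) => [lt_nw|ge_nw]; last by rewrite rot_oversize // leqW.
by rewrite -add1n rotD //; apply/rot1/IH.
Qed.

Lemma cycle_of_closed_walk x s :
  closed_walk (x :: s) -> uniq (x :: s) -> is_cycle I D (x :: rcons s x).
Proof.
move=> /= Cw Uw; split.
- by rewrite /= size_rcons.
- by move/walk_nth: Cw.
- by rewrite /= size_rcons /= nth_rcons ltnn eqxx.
- by rewrite /= size_rcons /= -cats1 take_size_cat.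
Qed.

Lemma closed_walk_of_cycle c : is_cycle I D c ->
  exists x s, [/\ c = x :: rcons s x, closed_walk (x :: s) & uniq (x :: s)].
Proof.
case=> size_c Ec last_c Uc; case: c size_c Ec last_c Uc => [|x c] //; case/lastP: c => [|s y] // _ Ec.
rewrite /= size_rcons /= nth_rcons ltnn eqxx => Eyx Uc; subst y.
exists x, s; split=> //=; first exact/walk_nth.
by move: Uc; rewrite -cats1 take_size_cat.
Qed.

Lemma not_uniq_split (w : seq mat) : ~~ uniq w ->
  exists p a q r, w = p ++ a :: q ++ a :: r.
Proof.
elim: w => [|x s IH] //=; rewrite negb_and negbK.
case/orP=> [/splitPr [q r] | /IH [p [a [q [r ->]]]]]; first by exists [::], x, q, r.
by exists (x :: p), a, q, r.
Qed.

Lemma closed_walk_split w : closed_walk w -> ~~ uniq w ->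
  exists w1 w2, [/\ closed_walk w1, closed_walk w2 & perm_eq w (w1 ++ w2)].
Proof.
move=> Cw /not_uniq_split [p [a [q [r Ew]]]].
have Erot : rot (size p) w = (a :: q) ++ (a :: r ++ p) by rewrite Ew rot_size_cat /= -catA.
have := closed_walk_rot (size p) Cw; rewrite Erot /= rcons_cat walk_cat.
move=> [Wq [Eqa Wrp]]; exists (a :: q), (a :: r ++ p); split=> //.
  by rewrite /= walk_rcons.
by rewrite perm_sym -Erot perm_rot.
Qed.

Definition silence (l0 : L) (A : mat) : mat := [ffun p => (p.1 != l0) && A p].

(* Removing transmissions keeps a schedule collision free, so silencing a link
   maps edges of the scheduling graph to edges. *)
Lemma in_E_silence l0 A B : in_E A B -> in_E (silence l0 A) (silence l0 B).
Proof.
move=> [S [S_free -> ->]]; exists (fun l t => (l != l0) && S l t); split.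
- move=> l t /andP[_ Slt] [phi Iphi coll]; apply: (S_free l t Slt).
  by exists phi => // l' /coll /andP[].
- by apply/ffunP => p; rewrite !ffunE.
- by apply/ffunP => p; rewrite !ffunE.
Qed.

Lemma closed_walk_silence l0 w : closed_walk w -> closed_walk (map (silence l0) w).
Proof.
have walk_silence x s : walk x s -> walk (silence l0 x) (map (silence l0) s).
  by elim: s x => [|y s IH] x //= [Exy Ws]; split; [apply: in_E_silence | apply: IH].
by case: w => [|x s] //= Cw; rewrite -map_rcons; apply: walk_silence.
Qed.

Variable R : realFieldType.
Hypothesis T_gt0 : (0 < T)%N.

Local Notation CR := (cycle_rates I D T (R:=R)).

Definition row_sum (A : mat) (l : L) : R := \sum_(j < T) (A (l, j) : nat)%:R.

Definition walk_rate (w : seq mat) (l : L) : R :=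
  (\sum_(A <- w) row_sum A l) / (size w * T)%:R.

Lemma rate_closed_walk x s l : rate R (x :: rcons s x) l = walk_rate (x :: s) l.
Proof.
rewrite /rate /walk_rate -rcons_cons size_rcons /=; congr (_ / _).
rewrite (big_nth mat0) big_mkord; apply: eq_bigr => i _.
by rewrite -rcons_cons nth_rcons ltn_ord.
Qed.

Lemma walk_rate_perm w w' l : perm_eq w w' -> walk_rate w l = walk_rate w' l.
Proof. by move=> pww'; rewrite /walk_rate (perm_big _ pww') (perm_size pww'). Qed.

Lemma walk_rate_cat w1 w2 l : w1 != [::] -> w2 != [::] ->
  let lam := (size w1)%:R / (size (w1 ++ w2))%:R in
  walk_rate (w1 ++ w2) l = lam * walk_rate w1 l + (1 - lam) * walk_rate w2 l.
Proof.
move=> nz1 nz2 /=; rewrite /walk_rate big_cat /= size_cat !natrM !natrD.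
have n1 : (size w1)%:R != 0 :> R by rewrite pnatr_eq0 size_eq0.
have n2 : (size w2)%:R != 0 :> R by rewrite pnatr_eq0 size_eq0.
have nT : T%:R != 0 :> R by rewrite pnatr_eq0 -lt0n.
have n12 : (size w1)%:R + (size w2)%:R != 0 :> R.
  by rewrite -natrD pnatr_eq0 addn_eq0 negb_and !size_eq0 nz1.
by field; rewrite n1 n2 nT n12.
Qed.

Lemma closed_walk_rate w : closed_walk w -> convl CR (walk_rate w).
Proof.
elim: {w}(size w) {-2}w (leqnn (size w)) => [|n IH] w le_wn Cw; first by case: w le_wn Cw.
have [Uw|nUw] := boolP (uniq w).
  case: w Cw Uw {le_wn} => [|x s] // Cw Uw.
  have Cc : CR (rate R (x :: rcons s x)) by exists (x :: rcons s x); first exact: cycle_of_closed_walk.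
  by apply: convl_ext (convl_point Cc) _ => l; apply: rate_closed_walk.
have [w1 [w2 [Cw1 Cw2 pw]]] := closed_walk_split Cw nUw.
have nz1 : w1 != [::] by case: w1 Cw1 {pw}.
have nz2 : w2 != [::] by case: w2 Cw2 {pw}.
have le1 : (size w1 <= n)%N.
  by rewrite -ltnS (leq_trans _ le_wn) // (perm_size pw) size_cat -addn1 leq_add2l lt0n size_eq0.
have le2 : (size w2 <= n)%N.
  by rewrite -ltnS (leq_trans _ le_wn) // (perm_size pw) size_cat addnC -addn1 leq_add2l lt0n size_eq0.
have lam01 : 0 <= ((size w1)%:R / (size (w1 ++ w2))%:R : R) <= 1.
  by rewrite divr_ge0 //= ler_pdivrMr ?mul1r ?ler_nat ?size_cat ?leq_addr // ltr0n addn_gt0 lt0n size_eq0 nz1.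
apply: convl_ext (convl_bin (IH _ le1 Cw1) (IH _ le2 Cw2) lam01) _ => l.
by rewrite (walk_rate_perm l pw) walk_rate_cat.
Qed.

Lemma walk_rate_silence l0 w l :
  walk_rate (map (silence l0) w) l = set_coord l0 0 (walk_rate w) l.
Proof.
rewrite /walk_rate /set_coord big_map size_map; case: eqP => [->|/eqP ne].
  by rewrite big1 ?mul0r // => A _; rewrite /row_sum big1 // => j _; rewrite ffunE /= eqxx.
by congr (_ / _); apply: eq_bigr => A _; apply: eq_bigr => j _; rewrite ffunE /= ne.
Qed.

(* Zeroing one coordinate of a cycle rate stays in the hull of the cycle rates:
   it is the rate of the closed walk obtained by silencing that link. *)
Lemma cycle_rate_zero_coord v l0 : CR v -> convl CR (set_coord l0 0 v).
Proof.
move=> [c /closed_walk_of_cycle [x [s [-> Cw _]]] ->].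
apply: convl_ext (closed_walk_rate (closed_walk_silence l0 Cw)) _ => l.
by rewrite walk_rate_silence /set_coord rate_closed_walk.
Qed.

End ClosedWalks.

Section MaximalCycles.
Variables (L : finType) (I : L -> {set {set L}}) (D : L -> L -> int) (T : nat).

Local Notation mat := (mat L T).
Local Notation mat0 := (mat0 L T).

Definition ones (c : seq mat) : nat :=
  (\sum_(i < size c) \sum_(p : L * 'I_T) (nth mat0 c i p : nat))%N.

Lemma ltn_sum_pointwise (J : finType) (F G : J -> nat) j0 :
  (forall j, F j <= G j)%N -> (F j0 < G j0)%N -> (\sum_j F j < \sum_j G j)%N.
Proof.
move=> leFG ltFG0; rewrite (bigD1 j0) //= [X in (_ < X)%N](bigD1 j0) //=.
by rewrite -addSn leq_add // leq_sum.
Qed.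

Lemma ones_bound c : (ones c <= size c * #|{: L * 'I_T}|)%N.
Proof.
rewrite -[size c]card_ord -sum_nat_const; apply: leq_sum => i _.
by rewrite -sum1_card; apply: leq_sum => p _; apply: leq_b1.
Qed.

Lemma ones_lt c c' : seq_ge c' c -> c' <> c -> (ones c < ones c')%N.
Proof.
move=> [size_eq ge] ne.
have [i [p [lt_ic' ne_ip]]] :
    exists i p, (i < size c')%N /\ nth mat0 c i p <> nth mat0 c' i p.
  apply: NNPP => eq_all; apply: ne; apply: (@eq_from_nth _ mat0) => // i lt_ic'.
  apply/ffunP => p; apply: NNPP => ne_ip; apply: eq_all; exists i, p; split=> //.
  by move=> E; apply: ne_ip.
have lt_ic : (i < size c)%N by rewrite -size_eq.
rewrite /ones size_eq; apply: (@ltn_sum_pointwise _ _ _ (Ordinal lt_ic)) => [j|/=].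
  by apply: leq_sum => q _; apply: (ge j); rewrite size_eq.
apply: (@ltn_sum_pointwise _ _ _ p) => [q|]; first exact: (ge i lt_ic').
by move: (ge i lt_ic' p) ne_ip; case: (nth mat0 c i p); case: (nth mat0 c' i p).
Qed.

Lemma seq_ge_refl (c : seq mat) : seq_ge c c.
Proof. by split=> // i _ p. Qed.

Lemma seq_ge_trans (a b c : seq mat) : seq_ge a b -> seq_ge b c -> seq_ge a c.
Proof.
move=> [size_ab ge_ab] [size_bc ge_bc]; split; first by rewrite size_ab.
by move=> i lt_ia p; apply: leq_trans (ge_bc i _ p) (ge_ab i lt_ia p); rewrite -size_ab.
Qed.

(* Every cycle is dominated by a maximal cycle: climbing to larger cycles of the
   same length strictly increases [ones], which is bounded. *)
Lemma max_cycle_above (c : seq mat) : is_cycle I D c ->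
  exists2 c', is_max_cycle I D c' & seq_ge c' c.
Proof.
have [n] := ubnP (size c * #|{: L * 'I_T}| - ones c).
elim: n c => [|n IH] c // lt_gap Cc.
have [Mc|nMc] := classic (is_max_cycle I D c); first by exists c; last exact: seq_ge_refl.
have [c1 [Cc1 ne size_eq ge]] :
    exists c1 : seq mat, [/\ is_cycle I D c1, c1 <> c, size c1 = size c & seq_ge c1 c].
  by apply: NNPP => none; apply: nMc.
have [c' Mc' ge'] : exists2 c', is_max_cycle I D c' & seq_ge c' c1.
  apply: IH Cc1; have := ones_lt ge ne; have := ones_bound c1.
  by rewrite size_eq; move: lt_gap; lia.
by exists c'; last exact: seq_ge_trans ge' ge.
Qed.

Lemma rate_mono (R : realFieldType) (c c' : seq mat) :
  seq_ge c' c -> forall l, rate R c l <= rate R c' l.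
Proof.
move=> [size_eq ge] l; rewrite /rate size_eq; apply: ler_wpM2r; first by rewrite invr_ge0.
apply: ler_sum => i _; apply: ler_sum => j _; rewrite ler_nat.
by apply: ge; rewrite size_eq (leq_trans (ltn_ord i)) // leq_pred.
Qed.

End MaximalCycles.

Unset Implicit Arguments.

Theorem theorem9 (L : finType) (I : L -> {set {set L}}) (D : L -> L -> int)
  (HL : (0 < #|L|)%N) (HI : forall l phi, phi \in I l -> phi != set0)
  (T : nat) (HT : (1 <= T)%N) (R : realFieldType) (x : L -> R)
  (Hx : forall l, 0 <= x l) :
  conv (cycle_rates I D T (R:=R)) x <->
  exists x' : L -> R, conv (max_cycle_rates I D T (R:=R)) x' /\ forall l, x l <= x' l.
Proof.
split.
- apply: conv_dominate => _ [c Cc ->].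
  have [c' Mc' ge'] := max_cycle_above Cc.
  by exists (rate R c'); [exists c' | apply: rate_mono].
- move=> [x' [Cx' le_xx']]; apply/conv_convl.
  apply: (convl_down_closed (cycle_rate_zero_coord HT) (y := x')).
    by apply/conv_convl; apply: conv_sub Cx' => _ [c [Cc _] ->]; exists c.
  by move=> l; rewrite Hx le_xx'.
Qed.
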